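(* Let $q$ be a prime power and let $B$ be a blocking set in the three-dimensional Möbius geometry $\Sigma(\mathbb{F}_q,\mathbb{F}_{q^3})$. Then $\#B\ge 2q^2-q-2$. Furthermore, $\#B\ge 2q^2-q-1$ for $q\ge 4$, $\#B\ge 2q^2-q$ for $q\ge 7$, and $\#B\ge 2q^2-q+1$ for $q\ge 19$.
   Context: For a field $F$ and a subfield $K$, the projective line $\mathbb{P}(F)$ is the set of submodules $F(a,b)$ of $F^2$ with $(a,b)\neq(0,0)$ (equivalently, $(a\ b)$ is the first row of an invertible $2\times2$ matrix); $\mathbb{P}(K)$ is embedded in $\mathbb{P}(F)$ via $K(a,b)\mapsto F(a,b)$. The chain geometry $\Sigma(K,F)$ has point set $\mathbb{P}(F)$ and its blocks, called chains, are the sets $\mathbb{P}(K)^g$ with $g\in\mathrm{GL}_2(F)$. When $[F:K]=3$ it is called the three-dimensional Möbius geometry over $K$. A blocking set is a set $B$ of points such that every chain contains at least one element of $B$. *)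

From HB Require Import structures.
From mathcomp Require Import all_boot all_order all_algebra all_field.
Set Implicit Arguments. Unset Strict Implicit. Unset Printing Implicit Defensive.
Import GRing.Theory.
Local Open Scope ring_scope.

(* Points of the projective line P(L): the one-dimensional submodules
   L v of L^2 (row vectors), v <> 0, represented as finite sets of vectors. *)
Definition pline (L : finFieldType) (v : 'rV[L]_2) : {set 'rV[L]_2} :=
  [set c *: v | c : L].

Definition proj_points (L : finFieldType) : {set {set 'rV[L]_2}} :=
  [set pline v | v in [set v : 'rV[L]_2 | v != 0]].

(* The chain P(K)^g, where P(K) is embedded in P(L) via iota : K -> L,
   K(a,b) |-> L(iota a, iota b), and g in GL_2(L) acts on rows: L v |-> L (v g). *)
Definition chain (K L : finFieldType) (iota : {rmorphism K -> L})
  (g : 'M[L]_2) : {set {set 'rV[L]_2}} :=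
  [set pline (map_mx iota v *m g) | v in [set v : 'rV[K]_2 | v != 0]].

Definition blocking_set (K L : finFieldType) (iota : {rmorphism K -> L})
  (B : {set {set 'rV[L]_2}}) : Prop :=
  B \subset proj_points L /\
  forall g : 'M[L]_2, g \in unitmx -> exists2 x, x \in B & x \in chain iota g.

(* Double counting over GL_2(F_{q^3}).  For an invertible g let i_g be the
   number of points of B on the chain P(F_q)^g; every i_g is positive because B
   is blocking.  GL_2 acts 3-transitively on the projective line and permutes
   the chains, so the number N of matrices g whose chain passes through three
   given distinct points does not depend on the points.  Counting incidences
   then expresses the number of g and the sums over g of i_g, i_g (i_g - 1)
   and i_g (i_g - 1) (i_g - 2) as multiples of N that are polynomial in q and
   b = #B.  Summing (i_g - 1)(i_g - 3)(i_g - 4) >= 0 over g gives P(q, b) >= 0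
   for an explicit cubic P in b, whereas P(q, .) is increasing on
   [0, 2q^2 - q] and still negative at each of the claimed bounds minus one. *)

From HB Require Import structures.
From mathcomp Require Import all_boot all_order all_algebra all_field.
From mathcomp Require Import zify ring.

Set Implicit Arguments. Unset Strict Implicit. Unset Printing Implicit Defensive.
Import Order.TTheory GRing.Theory Num.Theory.
Local Open Scope ring_scope.

Lemma rV_nz_coord (R : nmodType) n (v : 'rV[R]_n) : v != 0 -> exists j, v 0 j != 0.
Proof.
move=> v_nz; case: (pickP (fun j => v 0 j != 0)) => [j vj_nz|v0]; first by exists j.
case/eqP: v_nz; apply/rowP => j; rewrite mxE; exact/eqP/negbFE/v0.
Qed.

Lemma scaler_injl (F : fieldType) (V : lmodType F) (v : V) : v != 0 ->
  injective (fun c : F => c *: v).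
Proof.
move=> v_nz c d /eqP; rewrite -subr_eq0 -scalerBl scaler_eq0 (negPf v_nz) orbF.
by rewrite subr_eq0 => /eqP.
Qed.

Lemma card_uniform_fibers (A B : finType) (f : A -> B) (D : {set A}) m :
  {in D, forall x, #|[set y in D | f y == f x]| = m} -> #|D| = (#|f @: D| * m)%N.
Proof.
move=> fiber_m; rewrite -sum1_card (partition_big_imset f) /= -sum_nat_const.
apply: eq_bigr => _ /imsetP [x xD ->].
by rewrite sum1dep_card -(fiber_m x xD); apply: eq_card => y; rewrite inE.
Qed.

Lemma card_nonzero_rV2 (F : finFieldType) : #|[set v : 'rV[F]_2 | v != 0]| = (#|F| ^ 2).-1.
Proof.
have -> : [set v : 'rV[F]_2 | v != 0] = [set~ 0] by apply/setP => v; rewrite !inE.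
by rewrite cardsC1 card_mx.
Qed.

Section ProjectiveLine.
Variable L : finFieldType.
Implicit Types (u v : 'rV[L]_2).

Lemma mem_pline v : v \in pline v.
Proof. by apply/imsetP; exists 1; rewrite ?inE ?scale1r. Qed.

Lemma pline_scale (c : L) v : c != 0 -> pline (c *: v) = pline v.
Proof.
move=> c_nz; apply/setP => w; apply/imsetP/imsetP => -[d _ ->].
  by exists (d * c); rewrite ?inE ?scalerA.
by exists (d / c); rewrite ?inE // scalerA divfK.
Qed.

Lemma pline_eqP u v : u != 0 -> pline u = pline v -> exists2 c : L, c != 0 & u = c *: v.
Proof.
move=> u_nz uv; have := mem_pline u; rewrite uv => /imsetP [c _ u_def].
by exists c => //; apply: contraNneq u_nz => c0; rewrite u_def c0 scale0r.
Qed.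

End ProjectiveLine.

Section Chains.
Variables (K L : finFieldType) (iota : {rmorphism K -> L}).
Implicit Types (v w : 'rV[K]_2) (g : 'M[L]_2).

Lemma map_mx_scale_eq v w (c : L) : v != 0 ->
  map_mx iota w = c *: map_mx iota v -> exists k : K, w = k *: v.
Proof.
move=> v_nz wv; have [j vj_nz] := rV_nz_coord v_nz.
have c_def : c = iota (w 0 j / v 0 j).
  have := congr1 (fun A : 'rV[L]_2 => A 0 j) wv; rewrite !mxE fmorph_div => ->.
  by rewrite mulfK // fmorph_eq0.
by exists (w 0 j / v 0 j); apply: (@map_mx_inj _ _ iota); rewrite map_mxZ -c_def.
Qed.

Lemma chain_vec_neq0 v g : g \in unitmx -> v != 0 -> map_mx iota v *m g != 0.
Proof. by move=> gU; rewrite mulmx_free_eq0 ?row_free_unit // map_mx_eq0. Qed.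

Lemma chain_sub_points g : g \in unitmx -> chain iota g \subset proj_points L.
Proof.
move=> gU; apply/subsetP => x /imsetP [v]; rewrite inE => v_nz ->.
by apply/imsetP; exists (map_mx iota v *m g); rewrite // inE chain_vec_neq0.
Qed.

Lemma card_chain g : g \in unitmx -> #|chain iota g| = (#|K| + 1)%N.
Proof.
move=> gU; pose f v := pline (map_mx iota v *m g).
have fibers : {in [set v | v != 0], forall v,
    #|[set w in [set v | v != 0] | f w == f v]| = #|K|.-1}.
  move=> v; rewrite inE => v_nz.
  rewrite -(cardsC1 (0 : K)) -(card_imset _ (scaler_injl v_nz)); apply: eq_card => w.
  rewrite !inE; apply/andP/imsetP => [[w_nz /eqP fwv]|[c c_nz ->]].
    have [c _ wv] := pline_eqP (chain_vec_neq0 gU w_nz) fwv.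
    have [|k w_def] := @map_mx_scale_eq v w c v_nz.
      by apply: (can_inj (mulmxK gU)); rewrite wv scalemxAl.
    by exists k; rewrite // !inE; apply: contraNneq w_nz => k0; rewrite w_def k0 scale0r.
  rewrite !inE in c_nz *; rewrite scaler_eq0 negb_or c_nz v_nz /f map_mxZ -scalemxAl.
  by rewrite pline_scale ?fmorph_eq0.
have := card_uniform_fibers fibers; rewrite card_nonzero_rV2.
have -> : ((#|K| ^ 2).-1 = (#|K| + 1) * #|K|.-1)%N.
  by rewrite -!subn1; nia.
move/eqP; rewrite eqn_pmul2r; first by move/eqP ->.
by rewrite -subn1 subn_gt0 card_finNzRing_gt1.
Qed.

End Chains.

Lemma card_proj_points (L : finFieldType) : #|proj_points L| = (#|L| + 1)%N.
Proof.
have -> : proj_points L = chain (idfun : {rmorphism L -> L}) 1.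
  by apply: eq_imset => v; rewrite map_mx_id // mulmx1.
by rewrite card_chain ?unitmx1.
Qed.

Lemma card_setD1 (T : finType) (D : {set T}) x : x \in D -> #|D :\ x| = (#|D| - 1)%N.
Proof. by move=> xD; rewrite (cardsD1 x D) xD add1n subn1. Qed.

Lemma card_setD1I (T : finType) (D A : {set T}) x : x \in D -> x \in A ->
  #|(D :\ x) :&: A| = (#|D :&: A| - 1)%N.
Proof. by move=> xD xA; rewrite setIDAC card_setD1 // inE xD. Qed.

Section TripleCounting.
Local Open Scope nat_scope.
Variables (T M : finType) (U : pred M) (blk : M -> {set T}).

Definition nblocks3 x y z :=
  \sum_(g | U g && (x \in blk g) && (y \in blk g) && (z \in blk g)) 1.

Lemma sum_card_blocks (E : {set T}) (Q : pred M) (W : M -> nat) :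
  \sum_(z in E) \sum_(g | Q g && (z \in blk g)) W g = \sum_(g | Q g) #|E :&: blk g| * W g.
Proof.
transitivity (\sum_(z in E) \sum_(g | Q g) if z \in blk g then W g else 0).
  by apply: eq_bigr => z _; rewrite big_mkcondr.
rewrite exchange_big; apply: eq_bigr => g _.
by rewrite -big_mkcondr -sum_nat_const; apply: eq_bigl => z; rewrite !inE.
Qed.

Lemma sum_nblocks3 (D1 D2 D3 : {set T}) : D1 \subset D2 -> D2 \subset D3 ->
  \sum_(x in D1) \sum_(y in D2 :\ x) \sum_(z in D3 :\ x :\ y) nblocks3 x y z =
  \sum_(g | U g) #|D1 :&: blk g| * ((#|D2 :&: blk g| - 1) * (#|D3 :&: blk g| - 2)).
Proof.
move=> /subsetP D12 /subsetP D23.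
have sum_z x y : x \in D2 -> y \in D2 :\ x ->
    \sum_(z in D3 :\ x :\ y) nblocks3 x y z =
    \sum_(g | U g && (x \in blk g) && (y \in blk g)) (#|D3 :&: blk g| - 2).
  move=> xD2; rewrite !inE => /andP[yx yD2].
  rewrite sum_card_blocks; apply: eq_bigr => g /andP[/andP[_ xg] yg].
  by rewrite muln1 !card_setD1I ?inE ?yx ?D23 // -subnDA.
have sum_yz x : x \in D1 ->
    \sum_(y in D2 :\ x) \sum_(z in D3 :\ x :\ y) nblocks3 x y z =
    \sum_(g | U g && (x \in blk g)) (#|D2 :&: blk g| - 1) * (#|D3 :&: blk g| - 2).
  move=> xD1; rewrite (eq_bigr _ (sum_z x^~ (D12 x xD1))) sum_card_blocks.
  by apply: eq_bigr => g /andP[_ xg]; rewrite card_setD1I ?D12.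
by rewrite (eq_bigr _ sum_yz) sum_card_blocks.
Qed.

Variables (P : {set T}) (N : nat).
Hypothesis nblocks3_const : forall x y z, x \in P -> y \in P -> z \in P ->
  x != y -> x != z -> y != z -> nblocks3 x y z = N.

Lemma sum_nblocks3_const (D1 D2 D3 : {set T}) :
  D1 \subset D2 -> D2 \subset D3 -> D3 \subset P ->
  \sum_(x in D1) \sum_(y in D2 :\ x) \sum_(z in D3 :\ x :\ y) nblocks3 x y z =
  #|D1| * ((#|D2| - 1) * ((#|D3| - 2) * N)).
Proof.
move=> /subsetP D12 /subsetP D23 /subsetP D3P.
rewrite (eq_bigr (fun _ => (#|D2| - 1) * ((#|D3| - 2) * N))) ?sum_nat_const // => x xD1.
have xD2 := D12 x xD1; have xD3 := D23 x xD2.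
rewrite (eq_bigr (fun _ => (#|D3| - 2) * N)) ?sum_nat_const ?card_setD1 // => y.
rewrite !inE => /andP[yx yD2]; have yD3 := D23 y yD2.
rewrite (eq_bigr (fun _ => N)) ?sum_nat_const.
  by rewrite !card_setD1 ?inE ?yx // -subnDA.
move=> z; rewrite !inE => /and3P[zy zx zD3].
by rewrite nblocks3_const ?D3P // eq_sym.
Qed.

End TripleCounting.

Section Transitivity.
Variable L : finFieldType.
Implicit Types (u v : 'rV[L]_2) (h : 'M[L]_2).

Lemma pline_eq_scale u v (c : L) : u != 0 -> u = c *: v -> pline u = pline v.
Proof.
move=> u_nz u_def; rewrite u_def pline_scale //.
by apply: contraNneq u_nz => c0; rewrite u_def c0 scale0r.
Qed.

Lemma ord2P (j : 'I_2) : j = 0 \/ j = 1.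
Proof. by case: j => [[|[|//]]] j_lt; [left|right]; apply: val_inj. Qed.

Lemma sum_row2 (R : pzSemiRingType) (w : 'rV[R]_2) (A : 'M[R]_2) :
  w *m A = w 0 0 *: row 0 A + w 0 1 *: row 1 A.
Proof.
rewrite mulmx_sum_row !big_ord_recl big_ord0 addr0.
by have -> : lift ord0 ord0 = 1 :> 'I_2 by apply: val_inj.
Qed.

Lemma unitmx_of_rows u v : u != 0 -> v != 0 -> pline u != pline v ->
  exists2 A : 'M[L]_2, A \in unitmx & 'e_0 *m A = u /\ 'e_1 *m A = v.
Proof.
move=> u_nz v_nz uv; pose A : 'M[L]_2 := \matrix_i (if i == 0 then u else v).
have [rA0 rA1] : row 0 A = u /\ row 1 A = v by rewrite !rowK.
exists A; last by rewrite -!rowE.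
rewrite unitmxE unitfE; apply/det0P => -[w w_nz]; rewrite sum_row2 rA0 rA1 => /eqP.
rewrite addr_eq0 => /eqP wuv.
have w0_nz : w 0 0 != 0.
  apply: contra w_nz => /eqP w0; move: wuv; rewrite w0 scale0r => /esym/eqP.
  rewrite oppr_eq0 scaler_eq0 (negPf v_nz) orbF => /eqP w1.
  by apply/eqP/rowP => j; rewrite mxE; case: (ord2P j) => ->.
case/eqP: uv; apply: (pline_eq_scale (c := - (w 0 1 / w 0 0))) => //.
by apply: (scalerI w0_nz); rewrite wuv scalerA mulrN mulrC divfK // scaleNr.
Qed.

Definition act h (x : {set 'rV[L]_2}) : {set 'rV[L]_2} := [set w *m h | w in x].

Lemma act_pline h v : act h (pline v) = pline (v *m h).
Proof.
apply/setP => w; apply/imsetP/imsetP => [[_ /imsetP [c _ ->] ->]|[c _ ->]].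
  by exists c; rewrite // -scalemxAl.
by exists (c *: v); [apply/imsetP; exists c | rewrite -scalemxAl].
Qed.

Lemma proj_points_3transitive (x y z : {set 'rV[L]_2}) :
  x \in proj_points L -> y \in proj_points L -> z \in proj_points L ->
  x != y -> x != z -> y != z ->
  exists2 h, h \in unitmx &
    [/\ x = act h (pline 'e_0), y = act h (pline 'e_1) & z = act h (pline ('e_0 + 'e_1))].
Proof.
move=> /imsetP[u1 + ->] /imsetP[u2 + ->] /imsetP[u3 + ->]; rewrite !inE => u1_nz u2_nz u3_nz.
move=> u12 u13 u23; have [A A_unit [A0 A1]] := unitmx_of_rows u1_nz u2_nz u12.
have [w wA] : exists w, w *m A = u3 by exists (u3 *m invmx A); rewrite mulmxKV.
have u3_def : u3 = w 0 0 *: u1 + w 0 1 *: u2 by rewrite -wA sum_row2 !rowE A0 A1.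
have w0_nz : w 0 0 != 0.
  apply: contraNneq u23 => w0; apply/eqP; symmetry; apply: (pline_eq_scale (c := w 0 1) u3_nz).
  by rewrite u3_def w0 scale0r add0r.
have w1_nz : w 0 1 != 0.
  apply: contraNneq u13 => w1; apply/eqP; symmetry; apply: (pline_eq_scale (c := w 0 0) u3_nz).
  by rewrite u3_def w1 scale0r addr0.
exists (diag_mx w *m A).
  rewrite unitmx_mul A_unit andbT unitmxE unitfE det_diag.
  by apply/prodf_neq0 => j _; case: (ord2P j) => ->.
have e_diag (j : 'I_2) : 'e_j *m diag_mx w = w 0 j *: 'e_j :> 'rV[L]_2 by rewrite -rowE row_diag_mx.
have e01_diag : ('e_0 + 'e_1) *m diag_mx w = w.
  rewrite mulmxDl !e_diag; apply/rowP => j.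
  by case: (ord2P j) => ->; rewrite !mxE /= ?mulr1 ?mulr0 ?addr0 ?add0r.
rewrite !act_pline !mulmxA !e_diag e01_diag wA -!scalemxAl A0 A1.
by rewrite !pline_scale.
Qed.

End Transitivity.

Section ChainGeometry.
Variables (K L : finFieldType) (iota : {rmorphism K -> L}).
Implicit Types (g h : 'M[L]_2) (x y z : {set 'rV[L]_2}).

Local Notation nchains3 := (nblocks3 (fun g : 'M[L]_2 => g \in unitmx) (chain iota)).

Lemma chain_mulmx g h : chain iota (g *m h) = act h @: chain iota g.
Proof. by rewrite /chain -imset_comp; apply: eq_imset => v /=; rewrite act_pline mulmxA. Qed.

Lemma actK h : h \in unitmx -> cancel (act h) (act (invmx h)).
Proof.
move=> hU x; rewrite /act -imset_comp (eq_imset (g := id)) ?imset_id // => w /=.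
by rewrite mulmxK.
Qed.

Lemma mem_chain_mulmx g h x : h \in unitmx ->
  (act h x \in chain iota (g *m h)) = (x \in chain iota g).
Proof. by move=> hU; rewrite chain_mulmx (mem_imset _ _ (can_inj (actK hU))). Qed.

Lemma nchains3_act h x y z : h \in unitmx ->
  nchains3 (act h x) (act h y) (act h z) = nchains3 x y z.
Proof.
move=> hU; rewrite /nblocks3 (reindex_inj (can_inj (mulmxK hU))) /=.
by apply: eq_bigl => g; rewrite unitmx_mul hU andbT !mem_chain_mulmx.
Qed.

Lemma nchains3_const x y z :
  x \in proj_points L -> y \in proj_points L -> z \in proj_points L ->
  x != y -> x != z -> y != z ->
  nchains3 x y z = nchains3 (pline 'e_0) (pline 'e_1) (pline ('e_0 + 'e_1)).
Proof.
move=> xP yP zP xy xz yz; have [h hU [-> -> ->]] := proj_points_3transitive xP yP zP xy xz yz.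
exact: nchains3_act.
Qed.

End ChainGeometry.

(* [N * blocking_poly q b] is the sum over invertible g of
   [(i_g - 1)(i_g - 3)(i_g - 4)]; [l] is [(q^3 - 1) / (q - 1)]. *)
Definition blocking_poly (q b : int) : int :=
  let l := q ^+ 2 + q + 1 in
  b * (b - 1) * (b - 2) - 5 * l * b * (b - 1) + 12 * l * q ^+ 2 * b
  - 12 * l * q ^+ 2 * (q ^+ 2 - q + 1).

Lemma blocking_poly_step (q b : int) : 2 <= q -> 0 <= b -> b < 2 * q ^+ 2 - q ->
  blocking_poly q b < blocking_poly q (b + 1).
Proof.
move=> q_ge2 b_ge0 b_lt; rewrite -subr_gt0.
have -> : blocking_poly q (b + 1) - blocking_poly q b =
    3 * b ^+ 2 - 3 * b - 10 * (q ^+ 2 + q + 1) * b + 12 * (q ^+ 2 + q + 1) * q ^+ 2.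
  by rewrite /blocking_poly; ring.
have [q_le3|q_gt3] := lerP q 3; last by nia.
move: b_lt; have [->|->] : q = 2 \/ q = 3 by lia.
all: nia.
Qed.

Lemma blocking_poly_le (q b t : int) : 2 <= q -> 0 <= b <= t -> t <= 2 * q ^+ 2 - q ->
  blocking_poly q b <= blocking_poly q t.
Proof.
move=> q_ge2 /andP[b_ge0 b_le_t].
have [n ->] : exists n : nat, t = b + n.
  by exists `|t - b|%N; rewrite gez0_abs ?subr_ge0 //; ring.
elim: n => [|n IHn]; first by rewrite addr0.
rewrite -addn1 PoszD addrA => bound.
apply: le_trans (IHn _) (ltW (blocking_poly_step q_ge2 _ _)); lia.
Qed.

Lemma blocking_poly_thresholds (q : int) : 2 <= q ->
  [/\ blocking_poly q (2 * q ^+ 2 - q - 3) < 0,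
      4 <= q -> blocking_poly q (2 * q ^+ 2 - q - 2) < 0,
      7 <= q -> blocking_poly q (2 * q ^+ 2 - q - 1) < 0
    & 19 <= q -> blocking_poly q (2 * q ^+ 2 - q) < 0].
Proof.
move=> q_ge2; have cube_ge0 (q0 : int) : q0 <= q -> 0 <= (q - q0) * q ^+ 3.
  by move=> q0_le; rewrite mulr_ge0 ?exprn_ge0 ?subr_ge0 //; lia.
rewrite /blocking_poly; split=> [|q_ge|q_ge|q_ge].
- by have := cube_ge0 2 q_ge2; nia.
- by have := cube_ge0 4 q_ge; nia.
- by have := cube_ge0 7 q_ge; nia.
- by have := cube_ge0 19 q_ge; nia.
Qed.

Lemma card_bounds_of_blocking_poly (q b : nat) :
  (2 <= q)%N -> 0 <= blocking_poly q b ->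
  [/\ (2 * q ^ 2 - q - 2 <= b)%N,
      (4 <= q)%N -> (2 * q ^ 2 - q - 1 <= b)%N,
      (7 <= q)%N -> (2 * q ^ 2 - q <= b)%N
    & (19 <= q)%N -> (2 * q ^ 2 - q + 1 <= b)%N].
Proof.
move=> q_ge2 Pb_ge0.
have below (t : int) : b%:Z <= t -> t <= 2 * q%:Z ^+ 2 - q%:Z -> ~ blocking_poly q t < 0.
  move=> b_le_t t_le Pt_lt0.
  have Pb_le : blocking_poly q b <= blocking_poly q t by apply: blocking_poly_le; lia.
  by have := lt_le_trans Pt_lt0 (le_trans Pb_ge0 Pb_le); rewrite ltxx.
have q_ge2' : 2 <= q%:Z by lia.
have [P3 P2 P1 P0] := blocking_poly_thresholds q_ge2'.
split=> [|q4|q7|q19]; rewrite leqNgt; apply/negP => b_lt.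
- by apply: (below _ _ _ P3); lia.
- by apply: (below _ _ _ (P2 _)); lia.
- by apply: (below _ _ _ (P1 _)); lia.
- have q_le_sq : (q <= q ^ 2)%N by rewrite -{1}(expn1 q) leq_pexp2l; lia.
  by apply: (below _ _ _ (P0 _)); lia.
Qed.

Lemma Posz_falling2 (b X : nat) :
  (b * ((b - 1) * X))%N = b%:Z * (b%:Z - 1) * X :> int.
Proof. by case: b => [|b]; rewrite ?subSS ?subn0; lia. Qed.

Lemma Posz_falling3 (b X : nat) :
  (b * ((b - 1) * ((b - 2) * X)))%N = b%:Z * (b%:Z - 1) * (b%:Z - 2) * X :> int.
Proof. by case: b => [|[|b]]; rewrite ?subSS ?subn0; lia. Qed.

Lemma blocking_poly_ge0_of_counts (q b N s0 s1 s2 s3 : nat) :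
  (2 <= q)%N -> (0 < s0)%N -> (5 * s2 + 12 * s0 <= s3 + 12 * s1)%N ->
  s3 = (b * ((b - 1) * ((b - 2) * N)))%N ->
  (s2 * (q - 1) = b * ((b - 1) * ((q ^ 3 - 1) * N)))%N ->
  (s1 * (q * (q - 1)) = b * (q ^ 3 * ((q ^ 3 - 1) * N)))%N ->
  (s0 * ((q + 1) * (q * (q - 1))) = (q ^ 3 + 1) * (q ^ 3 * ((q ^ 3 - 1) * N)))%N ->
  0 <= blocking_poly q b.
Proof.
move=> q_ge2 s0_gt0 ineq E3 E2 E1 E0.
have N_gt0 : (0 < N)%N.
  by case: N {E1 E2 E3} E0 => [|N] //; rewrite !muln0 => /eqP; rewrite !muln_eq0; lia.
have Q_ge1 : (1 <= q ^ 3)%N by rewrite expn_gt0; lia.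
have Z3 : s3%:Z = b%:Z * (b%:Z - 1) * (b%:Z - 2) * N%:Z by rewrite E3 Posz_falling3.
have Z2 : s2%:Z * (q%:Z - 1) = b%:Z * (b%:Z - 1) * ((q%:Z ^+ 3 - 1) * N%:Z).
  by move/(congr1 Posz): E2; rewrite Posz_falling2; lia.
have Z1 : s1%:Z * (q%:Z * (q%:Z - 1)) = b%:Z * (q%:Z ^+ 3 * ((q%:Z ^+ 3 - 1) * N%:Z)).
  by move/(congr1 Posz): E1; lia.
have Z0 : s0%:Z * ((q%:Z + 1) * (q%:Z * (q%:Z - 1))) = (q%:Z ^+ 3 + 1) * (q%:Z ^+ 3 * ((q%:Z ^+ 3 - 1) * N%:Z)).
  by move/(congr1 Posz): E0; lia.
set c := (q%:Z + 1) * q%:Z * (q%:Z - 1).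
have key : c * (s3%:Z + 12 * s1%:Z - 5 * s2%:Z - 12 * s0%:Z) = c * N%:Z * blocking_poly q b.
  transitivity (c * s3%:Z + 12 * (q%:Z + 1) * (s1%:Z * (q%:Z * (q%:Z - 1)))
      - 5 * (q%:Z + 1) * q%:Z * (s2%:Z * (q%:Z - 1)) - 12 * (s0%:Z * ((q%:Z + 1) * (q%:Z * (q%:Z - 1))))).
    by rewrite /c; ring.
  by rewrite Z3 Z2 Z1 Z0 /c /blocking_poly; ring.
have c_gt0 : 0 < c by rewrite /c !mulr_gt0 //; lia.
have cN_gt0 : 0 < c * N%:Z by rewrite mulr_gt0 //; lia.
by rewrite -(pmulr_rge0 _ cN_gt0) -key mulr_ge0 ?(ltW c_gt0) //; lia.
Qed.

(* [(i - 1)(i - 3)(i - 4) >= 0] for every integer [i >= 1]. *)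
Lemma blocking_pointwise (i : nat) : (0 < i)%N ->
  (5 * (i * (i - 1)) + 12 <= i * ((i - 1) * (i - 2)) + 12 * i)%N.
Proof. by case: i => [|[|[|[|[|i]]]]] // _; rewrite ?subSS ?subn0; nia. Qed.

Lemma blocking_poly_card_ge0 (K L : finFieldType) (iota : {rmorphism K -> L})
    (B : {set {set 'rV[L]_2}}) :
  #|L| = (#|K| ^ 3)%N -> blocking_set iota B -> 0 <= blocking_poly #|K| #|B|.
Proof.
move=> HL [BP blocks]; set q := #|K|.
pose U := fun g : 'M[L]_2 => g \in unitmx.
pose N := nblocks3 U (chain iota) (pline 'e_0) (pline 'e_1) (pline ('e_0 + 'e_1)).
pose meet D g := #|D :&: chain iota g|.
have count (D1 D2 D3 : {set {set 'rV[L]_2}}) :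
    D1 \subset D2 -> D2 \subset D3 -> D3 \subset proj_points L ->
    (\sum_(g | U g) meet D1 g * ((meet D2 g - 1) * (meet D3 g - 2)) =
     #|D1| * ((#|D2| - 1) * ((#|D3| - 2) * N)))%N.
  move=> D12 D23 D3P; rewrite -sum_nblocks3 //; apply: (sum_nblocks3_const _ D12 D23 D3P).
  exact: nchains3_const.
have meet_points g : U g -> meet (proj_points L) g = (q + 1)%N.
  by move=> gU; rewrite /meet (setIidPr (chain_sub_points iota gU)) card_chain.
have meet_B g : U g -> (0 < meet B g)%N.
  by move=> gU; have [x xB xg] := blocks g gU; rewrite card_gt0; apply/set0Pn; exists x; rewrite inE xB.
have sub2 n : (n + 1 - 2 = n - 1)%N by lia.
have E2 := count B B _ (subxx B) BP (subxx _).
have E1 := count B _ _ BP (subxx _) (subxx _).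
have E0 := count _ _ _ (subxx (proj_points L)) (subxx _) (subxx _).
rewrite card_proj_points HL addnK sub2 in E2 E1 E0.
apply: (@blocking_poly_ge0_of_counts q #|B| N (\sum_(g | U g) 1)
  (\sum_(g | U g) meet B g) (\sum_(g | U g) meet B g * (meet B g - 1))
  (\sum_(g | U g) meet B g * ((meet B g - 1) * (meet B g - 2)))).
- exact: card_finNzRing_gt1.
- by rewrite (bigD1 (1 : 'M[L]_2)) //; apply: unitmx1.
- rewrite !big_distrr -!big_split /=; apply: leq_sum => g gU.
  by rewrite muln1 blocking_pointwise ?meet_B.
- exact: count.
- rewrite big_distrl -E2; apply: eq_bigr => g gU.
  by rewrite meet_points // sub2 ?addnK /= ?mul1n ?mulnA.
- rewrite big_distrl -E1; apply: eq_bigr => g gU.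
  by rewrite meet_points // sub2 ?addnK /= ?mul1n ?mulnA.
- rewrite big_distrl -E0; apply: eq_bigr => g gU.
  by rewrite meet_points // sub2 ?addnK /= ?mul1n ?mulnA.
Qed.

Theorem mainTheorem4 (K L : finFieldType) (iota : {rmorphism K -> L})
  (HL : #|L| = (#|K| ^ 3)%N) (B : {set {set 'rV[L]_2}}) :
  blocking_set iota B ->
  let q := #|K| in
  [/\ (2 * q ^ 2 - q - 2 <= #|B|)%N,
      (4 <= q)%N -> (2 * q ^ 2 - q - 1 <= #|B|)%N,
      (7 <= q)%N -> (2 * q ^ 2 - q <= #|B|)%N
    & (19 <= q)%N -> (2 * q ^ 2 - q + 1 <= #|B|)%N].
Proof.
move=> blocking q; apply: card_bounds_of_blocking_poly.
  exact: card_finNzRing_gt1.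
exact: blocking_poly_card_ge0 HL blocking.
Qed.
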